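(* Let $\mathcal{G}$ be a connected undirected graph on $\{1,\ldots,N\}$ with Laplacian $L$, fix a leader $l\in\{1,\ldots,N\}$, an integer $d\ge1$ and gains $k_p>0$, $k_u>0$. Let $L_l$ be $L$ with its $l$-th row replaced by zeros, $G_l=-(L_l\otimes I_d)\in\mathbb{R}^{Nd\times Nd}$, and let $M_l$ be $L_l$ with its $l$-th row and column deleted; let $\lambda_{2,l}=\min\sigma(M_l)$. Consider the linear system $$\dot{\boldsymbol e}=\begin{pmatrix}k_pG_l&0&I_{Nd}\\0&k_pG_l&k_uG_l\\0&0&k_uG_l\end{pmatrix}\boldsymbol e,\qquad \boldsymbol e=(\boldsymbol e_{\boldsymbol p}^T\ \boldsymbol e_{\boldsymbol v}^T\ \boldsymbol e_{\hat{\boldsymbol u}}^T)^T,\ \boldsymbol e_{\boldsymbol p},\boldsymbol e_{\boldsymbol v},\boldsymbol e_{\hat{\boldsymbol u}}\in\mathbb{R}^{Nd},$$ on the (invariant) set of error vectors whose $l$-th $d$-dimensional blocks $\boldsymbol e_{\boldsymbol p,l},\boldsymbol e_{\boldsymbol v,l},\boldsymbol e_{\hat{\boldsymbol u},l}$ are zero. Then the origin is globally asymptotically stable for this system, for any $k_p>0$, $k_u>0$. Moreover, the rates of convergence of $(\boldsymbol e_{\boldsymbol p},\boldsymbol e_{\boldsymbol v})$ and of $\boldsymbol e_{\hat{\boldsymbol u}}$ are dictated by $-k_p\lambda_{2,l}$ and $-k_u\lambda_{2,l}$, respectively, where $\lambda_{2,l}$ is the smallest positive eigenvalue of $L_l$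.
   Context: This is the free-evolution ($\dot{\boldsymbol u}_r\equiv 0$) error dynamics of a first-order leader-follower multi-agent scheme: agents $\dot{\boldsymbol p}_i=\hat{\boldsymbol u}_i-k_p\sum_{j\in\mathcal N_i}((\boldsymbol p_i-\boldsymbol p_j)-(\boldsymbol d_i-\boldsymbol d_j))$ for $i\ne l$, $\dot{\boldsymbol p}_l=\boldsymbol u_r$, estimator $\dot{\hat{\boldsymbol u}}_i=-k_u\sum_{j\in\mathcal N_i}(\hat{\boldsymbol u}_i-\hat{\boldsymbol u}_j)$ for $i\ne l$, $\hat{\boldsymbol u}_l=\boldsymbol u_r$, with errors $\boldsymbol e_{\boldsymbol p}=(\boldsymbol p-\mathbf 1\otimes\boldsymbol p_l)-(\boldsymbol d-\mathbf 1\otimes\boldsymbol d_l)$, $\boldsymbol e_{\boldsymbol v}=\dot{\boldsymbol p}-\mathbf 1\otimes\boldsymbol u_r$, $\boldsymbol e_{\hat{\boldsymbol u}}=\hat{\boldsymbol u}-\mathbf 1\otimes\boldsymbol u_r$; by construction their $l$-th blocks vanish. $L=\mathrm{diag}(A\mathbf 1)-A$ with $A$ the adjacency matrix; $\sigma(\cdot)$ is the spectrum; $M_l$ is symmetric positive definite and $\sigma(L_l)=\sigma(M_l)\cup\{0\}$. *)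

From HB Require Import structures.
From mathcomp Require Import all_boot all_order all_algebra.
From mathcomp Require Import mxtens.
From mathcomp Require Import all_classical all_reals all_analysis.

Set Implicit Arguments.
Unset Strict Implicit.
Unset Printing Implicit Defensive.

Import Order.TTheory GRing.Theory Num.Theory.
Local Open Scope ring_scope.

Section Defs.
Variable R : realType.

Definition adjacency N (e : rel 'I_N) : 'M[R]_N := \matrix_(i, j) (e i j)%:R.

Definition laplacian N (A : 'M[R]_N) : 'M[R]_N :=
  diag_mx (\row_i \sum_j A i j) - A.

Definition zero_row N (l : 'I_N) (L : 'M[R]_N) : 'M[R]_N :=
  \matrix_(i, j) (if i == l then 0 else L i j).

(* G_l = -(L_l (x) I_d); the Kronecker product is mxtens's tensmx,
   index (i,k) of R^{Nd} is  mxtens_index (i,k) = i*d + k *)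
Definition Gmat N d (l : 'I_N) (L : 'M[R]_N) : 'M[R]_(N * d) :=
  - (tensmx (zero_row l L) (1%:M : 'M[R]_d)).

Definition Mmat n (l : 'I_n.+1) (L : 'M[R]_n.+1) : 'M[R]_n :=
  row' l (col' l (zero_row l L)).

Definition sysmat m (kp ku : R) (G : 'M[R]_m) : 'M[R]_(m + (m + m)) :=
  block_mx (kp *: G) (row_mx 0 1%:M)
           0         (block_mx (kp *: G) (ku *: G) 0 (ku *: G)).

Definition e_p m (x : 'cV[R]_(m + (m + m))) : 'cV[R]_m := usubmx x.
Definition e_v m (x : 'cV[R]_(m + (m + m))) : 'cV[R]_m := usubmx (dsubmx x).
Definition e_u m (x : 'cV[R]_(m + (m + m))) : 'cV[R]_m := dsubmx (dsubmx x).

Definition vnorm m (v : 'cV[R]_m) : R := Num.sqrt (\sum_i v i 0 ^+ 2).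
Definition vnorm2 m (a b : 'cV[R]_m) : R := Num.sqrt (vnorm a ^+ 2 + vnorm b ^+ 2).

Definition block_zero N d (l : 'I_N) (y : 'cV[R]_(N * d)) : Prop :=
  forall k : 'I_d, y (mxtens_index (l, k)) 0 = 0.

Definition is_solution m (A : 'M[R]_m) (x : R -> 'cV[R]_m) : Prop :=
  forall (t : R) (i : 'I_m), is_derive t 1 (fun s => x s i 0) ((A *m x t) i 0).

End Defs.

(* The subspace where the leader's blocks vanish is invariant, and there
   L_l (x) I_d acts blockwise as the grounded Laplacian M_l, whose quadratic
   form is at least lam |y|^2 (a minimizer of the Rayleigh quotient on the unit
   sphere is an eigenvector).  lam > 0 because the graph is connected: a vector
   of zero Laplacian energy is constant along edges, hence equal to its value 0
   at the leader.  Energy estimates then give the decay of |e_u| at rate ku lam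
   and, when e_u = 0, of (e_p, e_v) at rate kp lam; for the coupled system
   |e_p|^2 + |e_v|^2 + c |e_u|^2 is a strict Lyapunov function once c is large.
   Eigenmodes of M_l at lam show that both rates are attained. *)

From HB Require Import structures.
From mathcomp Require Import all_boot all_order all_algebra.
From mathcomp Require Import mxtens.
From mathcomp Require Import all_classical all_reals all_analysis.
From mathcomp Require Import ring lra.
Import Order.TTheory GRing.Theory Num.Theory.
Import numFieldNormedType.Exports.
Local Open Scope classical_set_scope.
Local Open Scope ring_scope.

Set Implicit Arguments.
Unset Strict Implicit.
Unset Printing Implicit Defensive.

Section InnerProduct.
Variable R : realType.

Definition vdot m (u v : 'cV[R]_m) : R := \sum_i u i 0 * v i 0.

Lemma vdotC m (u v : 'cV[R]_m) : vdot u v = vdot v u.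
Proof. by apply: eq_bigr => i _; rewrite mulrC. Qed.

Lemma vdotDl m (u v w : 'cV[R]_m) : vdot (u + v) w = vdot u w + vdot v w.
Proof. by rewrite /vdot -big_split; apply: eq_bigr => i _; rewrite !mxE mulrDl. Qed.

Lemma vdotDr m (u v w : 'cV[R]_m) : vdot w (u + v) = vdot w u + vdot w v.
Proof. by rewrite vdotC vdotDl !(vdotC w). Qed.

Lemma vdotZl m a (u v : 'cV[R]_m) : vdot (a *: u) v = a * vdot u v.
Proof. by rewrite /vdot mulr_sumr; apply: eq_bigr => i _; rewrite !mxE mulrA. Qed.

Lemma vdotZr m a (u v : 'cV[R]_m) : vdot u (a *: v) = a * vdot u v.
Proof. by rewrite vdotC vdotZl vdotC. Qed.

Lemma vdotNl m (u v : 'cV[R]_m) : vdot (- u) v = - vdot u v.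
Proof. by rewrite -scaleN1r vdotZl mulN1r. Qed.

Lemma vdotNr m (u v : 'cV[R]_m) : vdot u (- v) = - vdot u v.
Proof. by rewrite vdotC vdotNl vdotC. Qed.

Lemma vdot0l m (u : 'cV[R]_m) : vdot 0 u = 0.
Proof. by rewrite /vdot big1 // => i _; rewrite mxE mul0r. Qed.

Lemma vdot0r m (u : 'cV[R]_m) : vdot u 0 = 0.
Proof. by rewrite vdotC vdot0l. Qed.

Lemma vdotvv_ge0 m (u : 'cV[R]_m) : 0 <= vdot u u.
Proof. by apply: sumr_ge0 => i _; rewrite -expr2 sqr_ge0. Qed.

Lemma vdotvv_eq0 m (u : 'cV[R]_m) : (vdot u u == 0) = (u == 0).
Proof.
rewrite /vdot; under eq_bigr do rewrite -expr2.
apply/eqP/eqP => [uu0|->]; last exact: vdot0l.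
apply/matrixP => i j; rewrite (ord1 j) mxE.
have /eqP := psumr_eq0P (fun i _ => sqr_ge0 (u i 0)) uu0 (i := i) isT.
by rewrite sqrf_eq0 => /eqP.
Qed.

Lemma vdotvv_gt0 m (u : 'cV[R]_m) : u != 0 -> 0 < vdot u u.
Proof. by move=> u0; rewrite lt_def vdotvv_eq0 u0 vdotvv_ge0. Qed.

Lemma vnormE m (u : 'cV[R]_m) : vnorm u = Num.sqrt (vdot u u).
Proof. by rewrite /vnorm /vdot; congr Num.sqrt; apply: eq_bigr => i _; rewrite expr2. Qed.

Lemma vnormZ m a (u : 'cV[R]_m) : vnorm (a *: u) = `|a| * vnorm u.
Proof. by rewrite !vnormE vdotZl vdotZr mulrA -expr2 sqrtrM ?sqr_ge0 // sqrtr_sqr. Qed.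

Lemma vnorm2E m (u v : 'cV[R]_m) : vnorm2 u v = Num.sqrt (vdot u u + vdot v v).
Proof. by rewrite /vnorm2 !vnormE !sqr_sqrtr ?vdotvv_ge0. Qed.

Lemma vdot_mulmx m n (M : 'M[R]_(m, n)) u v : vdot u (M *m v) = vdot (M^T *m u) v.
Proof.
rewrite /vdot.
under eq_bigr do rewrite mxE big_distrr /=.
under [RHS]eq_bigr do rewrite mxE big_distrl /=.
rewrite exchange_big /=; apply: eq_bigr => j _; apply: eq_bigr => i _.
by rewrite mxE mulrCA mulrA.
Qed.

Lemma vdot_young m (u v : 'cV[R]_m) (eps : R) : 0 < eps ->
  2 * vdot u v <= eps * vdot u u + eps^-1 * vdot v v.
Proof.
move=> eps0; have := vdotvv_ge0 (eps *: u - v).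
rewrite vdotDl !vdotDr !vdotNl !vdotNr !vdotZl !vdotZr opprK (vdotC v u) => h.
rewrite -(ler_pM2l eps0) mulrDr !mulrA (mulrC eps eps^-1) mulVf ?gt_eqF // mul1r.
set a := vdot u u in h *; set b := vdot u v in h *; set c := vdot v v in h *; nra.
Qed.

End InnerProduct.

Section Rayleigh.
Variable R : realType.

Lemma continuous_sum (T : topologicalType) (I : finType) (F : I -> T -> R) :
  (forall i, continuous (F i)) -> continuous (fun x => \sum_i F i x).
Proof.
move=> Fc; suff sumc (s : seq I) : continuous (fun x => \sum_(i <- s) F i x) by [].
elim: s => [|i s IHs].
  by under eq_fun do rewrite big_nil; exact: cst_continuous.
under eq_fun do rewrite big_cons.
by move=> x; apply: continuousD; [exact: Fc | exact: IHs].
Qed.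

Lemma quadratic_form_continuous n (M : 'M[R]_n) :
  continuous (fun r : 'rV[R]_n => vdot r^T (M *m r^T)).
Proof.
have -> : (fun r : 'rV[R]_n => vdot r^T (M *m r^T)) =
    (fun r => \sum_i r ord0 i * \sum_j M i j * r ord0 j).
  apply: funext => r; apply: eq_bigr => i _.
  by rewrite !mxE; congr (_ * _); apply: eq_bigr => j _; rewrite mxE.
apply: continuous_sum => i x; apply: continuousM; first exact: coord_continuous.
apply: continuous_sum => j y; apply: continuousM; first exact: cst_continuous.
exact: coord_continuous.
Qed.

Lemma unit_sphere_compact n : compact [set r : 'rV[R]_n | vdot r^T r^T = 1].
Proof.
pose box := [set r : 'rV[R]_n | forall i, `[(-1 : R), 1]%classic (r ord0 i)].
have box_compact : compact box.
  by apply: (@rV_compact _ _ (fun=> `[(-1 : R), 1]%classic)) => _; exact: segment_compact.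
have sphere_closed : closed [set r : 'rV[R]_n | vdot r^T r^T = 1].
  have sqE r : vdot r^T r^T = vdot r^T (1%:M *m r^T) by rewrite mul1mx.
  under eq_set do rewrite sqE.
  apply: (@preimage_closed _ _ (fun r : 'rV[R]_n => vdot r^T (1%:M *m r^T)) [set 1]).
    by move=> r _; exact: quadratic_form_continuous.
  exact: closed_eq.
apply: (subclosed_compact sphere_closed box_compact) => r /= r1 i.
rewrite /= in_itv /= -ler_norml -(expr_le1 (n := 2)) //.
rewrite real_normK ?num_real // -r1 /vdot (bigD1 i) //= !mxE -expr2 lerDl.
by apply: sumr_ge0 => j _; rewrite !mxE -expr2 sqr_ge0.
Qed.

Lemma quadratic_form_min_unit n (M : 'M[R]_n.+1) :
  exists2 w : 'cV[R]_n.+1, vdot w w = 1 &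
    forall v, vdot v v = 1 -> vdot w (M *m w) <= vdot v (M *m v).
Proof.
pose sphere := [set r : 'rV[R]_n.+1 | vdot r^T r^T = 1].
have sphere0 : sphere !=set0.
  exists (delta_mx 0 0); rewrite /sphere /= /vdot (bigD1 0) //= big1 ?addr0.
    by rewrite !mxE mulr1.
  by move=> i /negPf i0; rewrite !mxE i0 mulr0n mulr0.
have [c c1 cmin] := EVT_min_rV sphere0 (@unit_sphere_compact n.+1)
  (continuous_subspaceT (@quadratic_form_continuous n.+1 M)).
exists c^T; first by move: c1; rewrite inE.
by move=> v v1; rewrite -[v]trmxK; apply: cmin; rewrite inE /sphere /= trmxK.
Qed.

Lemma quadratic_form_ge_min n (M : 'M[R]_n.+1) :
  exists2 w : 'cV[R]_n.+1, vdot w w = 1 &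
    forall v, vdot w (M *m w) * vdot v v <= vdot v (M *m v).
Proof.
have [w w1 wmin] := quadratic_form_min_unit M; exists w => // v.
have [->|v0] := eqVneq v 0; first by rewrite mulmx0 !vdot0l mulr0.
have vv0 := vdotvv_gt0 v0.
pose s := Num.sqrt (vdot v v).
have s0 : 0 < s by rewrite sqrtr_gt0.
have s2 : s ^+ 2 = vdot v v by rewrite sqr_sqrtr // ltW.
have := wmin (s^-1 *: v).
rewrite -scalemxAr !vdotZl !vdotZr !mulrA -expr2 exprVn s2 mulVf ?gt_eqF // => /(_ erefl).
by rewrite -(ler_pM2r vv0) mulrAC mulVf ?gt_eqF // mul1r.
Qed.

Lemma quadratic_ge0_lin_coef_eq0 (a b : R) :
  0 <= b -> (forall t, 0 <= 2 * t * a + t ^+ 2 * b) -> a = 0.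
Proof.
move=> b0 /(_ (- a / (b + 1))).
set t := - a / (b + 1); have b1 : 0 < b + 1 by lra.
have ht : t * (b + 1) = - a by rewrite /t mulfVK ?gt_eqF.
rewrite -(pmulr_lge0 _ (exprn_gt0 2 b1)).
have -> : (2 * t * a + t ^+ 2 * b) * (b + 1) ^+ 2 =
    2 * (t * (b + 1)) * a * (b + 1) + (t * (b + 1)) ^+ 2 * b by ring.
rewrite ht; nra.
Qed.

Lemma min_quadratic_form_eigen n (M : 'M[R]_n) (w : 'cV[R]_n) : M^T = M ->
  vdot w w = 1 -> (forall v, vdot w (M *m w) * vdot v v <= vdot v (M *m v)) ->
  M *m w = vdot w (M *m w) *: w.
Proof.
move=> symM w1; set mu := vdot w (M *m w) => mu_min.
apply/eqP; rewrite -subr_eq0 -vdotvv_eq0; apply/eqP.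
suff orth y : vdot y (M *m w - mu *: w) = 0 by exact: orth.
apply: (@quadratic_ge0_lin_coef_eq0 _ (vdot y (M *m y) - mu * vdot y y)).
  by rewrite subr_ge0.
move=> t; have h := mu_min (w + t *: y).
rewrite mulmxDr -scalemxAr !vdotDl !vdotDr !vdotZl !vdotZr w1 -/mu in h.
rewrite [vdot w (M *m y)]vdot_mulmx symM (vdotC (M *m w)) (vdotC w y) -subr_ge0 in h.
rewrite vdotDr vdotNr vdotZr.
set D := vdot y (M *m w) in h *; set E := vdot y w in h *.
set F := vdot y (M *m y) in h *; set G := vdot y y in h *.
by congr (0 <= _): h; ring.
Qed.

Lemma symmetric_eigenvalueP n (M : 'M[R]_n) a : M^T = M ->
  reflect (exists2 w : 'cV[R]_n, M *m w = a *: w & w != 0) (eigenvalue M a).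
Proof.
move=> symM; apply: (iffP eigenvalueP) => -[v Mv v0]; exists v^T;
  by [rewrite -symM -trmx_mul Mv linearZ | rewrite -trmx0 (inj_eq trmx_inj)].
Qed.

Lemma rayleigh_ge_eigenvalue n (M : 'M[R]_n) lam : M^T = M ->
  (forall a, eigenvalue M a -> lam <= a) ->
  forall v, lam * vdot v v <= vdot v (M *m v).
Proof.
case: n M => [|n] M symM lam_min v; first by rewrite /vdot !big_ord0 mulr0.
have [w w1 wmin] := quadratic_form_ge_min M.
have eig : eigenvalue M (vdot w (M *m w)).
  apply/symmetric_eigenvalueP => //; exists w; first exact: min_quadratic_form_eigen.
  by rewrite -vdotvv_eq0 w1 oner_eq0.
by apply: le_trans (wmin v); rewrite ler_wpM2r ?vdotvv_ge0 ?lam_min.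
Qed.

End Rayleigh.

Section GraphLaplacian.
Variables (R : realType) (N : nat) (e : rel 'I_N).
Hypothesis e_sym : symmetric e.

Local Notation L := (laplacian (adjacency R e)).

Lemma laplacianE i j :
  L i j = (if i == j then \sum_k (e i k)%:R else 0) - (e i j)%:R.
Proof.
rewrite !mxE; congr (_ - _); case: eqP => [->|_]; last by rewrite mulr0n.
by rewrite mulr1n; apply: eq_bigr => k _; rewrite mxE.
Qed.

Lemma laplacian_sym : L^T = L.
Proof.
apply/matrixP => i j; rewrite mxE !laplacianE e_sym (eq_sym j).
by case: eqP => // ->.
Qed.

Lemma laplacian_quadratic (x : 'I_N -> R) :
  2 * (\sum_i \sum_j x i * L i j * x j) = \sum_i \sum_j (e i j)%:R * (x i - x j) ^+ 2.
Proof.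
pose T i j := (e i j)%:R * x i ^+ 2 - (e i j)%:R * x i * x j : R.
have rowE i : \sum_j x i * L i j * x j = \sum_j T i j.
  under eq_bigr do rewrite laplacianE mulrBr mulrBl.
  rewrite sumrB [X in X - _](bigD1 i) //= eqxx [X in _ + X - _]big1 ?addr0;
    last by move=> j /negPf ji; rewrite eq_sym ji mulr0 mul0r.
  rewrite /T sumrB mulrAC -expr2 mulrC mulr_suml; congr (_ - _).
  by apply: eq_bigr => j _; rewrite [x i * _]mulrC.
have edgeE i j : (e i j)%:R * (x i - x j) ^+ 2 = T i j + T j i.
  by rewrite /T (e_sym j i); ring.
under eq_bigr do rewrite rowE.
under [RHS]eq_bigr do under eq_bigr do rewrite edgeE.
under [RHS]eq_bigr do rewrite big_split /=.
by rewrite big_split /= [X in _ = _ + X]exchange_big /= mulr2n mulrDl mul1r.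
Qed.

Lemma laplacian_quadratic_ge0 (x : 'I_N -> R) : 0 <= \sum_i \sum_j x i * L i j * x j.
Proof.
rewrite -(pmulr_rge0 _ (ltr0Sn _ 1)) laplacian_quadratic.
by do 2!apply: sumr_ge0 => ? _; rewrite mulr_ge0 ?sqr_ge0.
Qed.

Lemma laplacian_quadratic_eq0 (x : 'I_N -> R) :
  \sum_i \sum_j x i * L i j * x j = 0 -> forall i j, e i j -> x i = x j.
Proof.
move=> /(congr1 (fun s => 2 * s)); rewrite laplacian_quadratic mulr0 => x0 i j eij.
have term_ge0 i' j' : 0 <= (e i' j')%:R * (x i' - x j') ^+ 2 by rewrite mulr_ge0 ?sqr_ge0.
have row0 :=
  psumr_eq0P (fun i' _ => sumr_ge0 _ (fun j' _ => term_ge0 i' j')) x0 (i := i) isT.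
have /eqP := psumr_eq0P (fun j' _ => term_ge0 i j') row0 (i := j) isT.
by rewrite eij mul1r sqrf_eq0 subr_eq0 => /eqP.
Qed.

End GraphLaplacian.

Section GroundedLaplacian.
Variables (R : realType) (n : nat) (l : 'I_n.+1).

Lemma MmatE (L : 'M[R]_n.+1) i j : Mmat l L i j = L (lift l i) (lift l j).
Proof. by rewrite !mxE eq_sym eq_liftF. Qed.

Lemma Mmat_sym (L : 'M[R]_n.+1) : L^T = L -> (Mmat l L)^T = Mmat l L.
Proof. by move=> symL; apply/matrixP => i j; rewrite mxE !MmatE -{1}symL mxE. Qed.

Definition extend_by0 (a : 'cV[R]_n) (i : 'I_n.+1) : R :=
  if unlift l i is Some i' then a i' 0 else 0.

Lemma Mmat_quadraticE (L : 'M[R]_n.+1) (a : 'cV[R]_n) :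
  vdot a (Mmat l L *m a) =
  \sum_i \sum_j extend_by0 a i * L i j * extend_by0 a j.
Proof.
rewrite /vdot (bigD1_ord l) //= {1}/extend_by0 unlift_none.
rewrite [X in _ = X + _]big1 ?add0r => [|j _]; last by rewrite !mul0r.
apply: eq_bigr => i _; rewrite mxE (bigD1_ord l) //= [extend_by0 a l]/extend_by0.
rewrite unlift_none mulr0 add0r big_distrr /=; apply: eq_bigr => j _.
by rewrite /extend_by0 !liftK MmatE mulrA.
Qed.

Variable e : rel 'I_n.+1.
Hypotheses (e_sym : symmetric e) (e_connected : forall i j, connect e i j).

Local Notation L := (laplacian (adjacency R e)).

Lemma Mmat_laplacian_pos (a : 'cV[R]_n) : a != 0 -> 0 < vdot a (Mmat l L *m a).
Proof.
move=> a0; rewrite lt_def Mmat_quadraticE laplacian_quadratic_ge0 // andbT.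
apply: contra a0 => /eqP /(laplacian_quadratic_eq0 e_sym) x_edge.
have x0 i : extend_by0 a i = 0.
  have xl : extend_by0 a l = 0 by rewrite /extend_by0 unlift_none.
  have [p ep ->] := connectP (e_connected l i).
  elim: p l xl ep => [|j p IHp] k xk //= /andP[ekj ep].
  by apply: IHp ep; rewrite -(x_edge _ _ ekj).
apply/eqP/matrixP => i j; rewrite (ord1 j) mxE.
by have := x0 (lift l i); rewrite /extend_by0 liftK.
Qed.

Lemma Mmat_laplacian_eigenvalue_gt0 lam : eigenvalue (Mmat l L) lam -> 0 < lam.
Proof.
case/(symmetric_eigenvalueP _ (Mmat_sym (laplacian_sym R e_sym))) => w Mw w0.
by have := Mmat_laplacian_pos w0; rewrite Mw vdotZr pmulr_lgt0 ?vdotvv_gt0.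
Qed.

End GroundedLaplacian.

Lemma sum_mxtens_index (R : realType) m n (F : 'I_(m * n) -> R) :
  \sum_x F x = \sum_(i < m) \sum_(k < n) F (mxtens_index (i, k)).
Proof.
rewrite pair_big /= (reindex (@mxtens_index m n)) /=; first by apply: eq_bigr => -[].
by exists (@mxtens_unindex m n) => x _; [exact: mxtens_indexK | exact: mxtens_unindexK].
Qed.

Section LeaderKronecker.
Variables (R : realType) (n d : nat) (l : 'I_n.+1) (L : 'M[R]_n.+1).
Hypothesis symL : L^T = L.

Local Notation K := (tensmx (zero_row l L) (1%:M : 'M[R]_d)).
Local Notation M := (Mmat l L).

Definition follower_coord (z : 'cV[R]_(n.+1 * d)) (k : 'I_d) : 'cV[R]_n :=
  \col_i z (mxtens_index (lift l i, k)) 0.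

Lemma tensmx_zero_row_mulE (z : 'cV[R]_(n.+1 * d)) i k :
  (K *m z) (mxtens_index (i, k)) 0 =
  \sum_j zero_row l L i j * z (mxtens_index (j, k)) 0.
Proof.
rewrite mxE sum_mxtens_index; apply: eq_bigr => j _.
rewrite (bigD1 k) //= big1 ?addr0 => [|k' /negPf k'k].
  by rewrite tensmxE [1%:M k k]mxE eqxx mulr1.
by rewrite tensmxE [1%:M k k']mxE eq_sym k'k mulr0 mul0r.
Qed.

Lemma block_zero_tensmx_zero_row z : block_zero l (K *m z).
Proof.
by move=> k; rewrite tensmx_zero_row_mulE big1 // => j _; rewrite mxE eqxx mul0r.
Qed.

Lemma tensmx_zero_row_mul_lift z i k : block_zero l z ->
  (K *m z) (mxtens_index (lift l i, k)) 0 = (M *m follower_coord z k) i 0.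
Proof.
move=> zl; rewrite tensmx_zero_row_mulE mxE (bigD1_ord l) //= zl mulr0 add0r.
by apply: eq_bigr => j _; rewrite MmatE !mxE eq_sym eq_liftF.
Qed.

Lemma vdot_tensmx_zero_row y z : block_zero l z ->
  vdot y (K *m z) = \sum_k vdot (follower_coord y k) (M *m follower_coord z k).
Proof.
move=> zl; rewrite /vdot sum_mxtens_index (bigD1_ord l) //= big1 ?add0r => [|k _];
  last by rewrite block_zero_tensmx_zero_row mulr0.
rewrite exchange_big /=; apply: eq_bigr => k _; apply: eq_bigr => i _.
by rewrite tensmx_zero_row_mul_lift // [follower_coord y k i 0]mxE.
Qed.

Lemma vdotvv_follower_coord y : block_zero l y ->
  vdot y y = \sum_k vdot (follower_coord y k) (follower_coord y k).
Proof.
move=> yl; rewrite /vdot sum_mxtens_index (bigD1_ord l) //= big1 ?add0r => [|k _];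
  last by rewrite yl mulr0.
rewrite exchange_big /=; apply: eq_bigr => k _; apply: eq_bigr => i _.
by rewrite !mxE.
Qed.

Lemma vdot_tensmx_zero_rowC y z : block_zero l y -> block_zero l z ->
  vdot y (K *m z) = vdot z (K *m y).
Proof.
move=> yl zl; rewrite !vdot_tensmx_zero_row //; apply: eq_bigr => k _.
by rewrite vdot_mulmx Mmat_sym // vdotC.
Qed.

Lemma rayleigh_tensmx_zero_row lam : (forall a, eigenvalue M a -> lam <= a) ->
  forall y, block_zero l y -> lam * vdot y y <= vdot y (K *m y).
Proof.
move=> lam_min y yl; rewrite vdot_tensmx_zero_row // vdotvv_follower_coord // mulr_sumr.
by apply: ler_sum => k _; apply: rayleigh_ge_eigenvalue => //; exact: Mmat_sym.
Qed.

Lemma tensmx_zero_row_eigenvector lam : (0 < d)%N -> eigenvalue M lam ->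
  exists w, [/\ block_zero l w, w != 0 & K *m w = lam *: w].
Proof.
move=> d_gt0 /(symmetric_eigenvalueP _ (Mmat_sym l symL)) [w0 Mw0 w00].
pose k0 : 'I_d := Ordinal d_gt0.
pose w : 'cV[R]_(n.+1 * d) := \col_x
  (let: (i, k) := mxtens_unindex x in if k == k0 then extend_by0 l w0 i else 0).
have wE i k : w (mxtens_index (i, k)) 0 = if k == k0 then extend_by0 l w0 i else 0.
  by rewrite mxE mxtens_indexK.
have wl : block_zero l w by move=> k; rewrite wE /extend_by0 unlift_none if_same.
have w_coord k : follower_coord w k = if k == k0 then w0 else 0.
  apply/matrixP => i j; rewrite (ord1 j) mxE wE /extend_by0 liftK.
  by case: (k == k0); rewrite ?mxE.
exists w; split => //.
  apply: contra w00 => /eqP w0'; have := w_coord k0.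
  by rewrite w0' eqxx => <-; apply/eqP/matrixP => i j; rewrite !mxE.
apply/matrixP => x j; rewrite (ord1 j); case: (mxtens_indexP x) => i k.
rewrite [RHS]mxE; case: (unliftP l i) => [i' ->|->]; last first.
  by rewrite block_zero_tensmx_zero_row wl mulr0.
rewrite tensmx_zero_row_mul_lift // w_coord wE /extend_by0 liftK.
by case: (k == k0); rewrite ?mulmx0 ?Mw0 !mxE ?mulr0.
Qed.

End LeaderKronecker.

Section ColumnDerivative.
Variable R : realType.

Definition is_derive_col m (t : R) (f : R -> 'cV[R]_m) (df : 'cV[R]_m) :=
  forall i, is_derive t 1 (fun s => f s i 0) (df i 0).

Lemma is_derive_col_usubmx m1 m2 (t : R) (f : R -> 'cV[R]_(m1 + m2)) df :
  is_derive_col t f df -> is_derive_col t (fun s => usubmx (f s)) (usubmx df).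
Proof. by move=> fd i; under eq_fun do rewrite mxE; rewrite mxE; exact: fd. Qed.

Lemma is_derive_col_dsubmx m1 m2 (t : R) (f : R -> 'cV[R]_(m1 + m2)) df :
  is_derive_col t f df -> is_derive_col t (fun s => dsubmx (f s)) (dsubmx df).
Proof. by move=> fd i; under eq_fun do rewrite mxE; rewrite mxE; exact: fd. Qed.

Lemma is_derive_col_col_mx m1 m2 (t : R) (f : R -> 'cV[R]_m1) (g : R -> 'cV[R]_m2) df dg :
  is_derive_col t f df -> is_derive_col t g dg ->
  is_derive_col t (fun s => col_mx (f s) (g s)) (col_mx df dg).
Proof.
move=> fd gd i; rewrite -(splitK i); case: (fintype.split i) => j /=.
  by under eq_fun do rewrite col_mxEu; rewrite col_mxEu; exact: fd.
by under eq_fun do rewrite col_mxEd; rewrite col_mxEd; exact: gd.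
Qed.

Lemma is_derive_col_scale m (t : R) (h : R -> R) (dh : R) (w : 'cV[R]_m) :
  is_derive t 1 h dh -> is_derive_col t (fun s => h s *: w) (dh *: w).
Proof.
move=> hd i; under eq_fun do rewrite mxE mulrC; rewrite mxE mulrC.
exact: is_deriveZ.
Qed.

Lemma is_derive_vdot m (t : R) (f : R -> 'cV[R]_m) df : is_derive_col t f df ->
  is_derive t 1 (fun s => vdot (f s) (f s)) (2 * vdot (f t) df).
Proof.
move=> fd; have := is_derive_sum (fun i => is_deriveM (fd i) (fd i)).
rewrite -fct_sumE => sumd; apply: is_derive_eq sumd _.
by rewrite /vdot mulr_sumr; apply: eq_bigr => i _; rewrite mulr2n mulrDl mul1r.
Qed.

End ColumnDerivative.

Section ExponentialDecay.
Variable R : realType.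

Lemma is_derive_expR_scale (a t : R) :
  is_derive t 1 (fun s => expR (a * s)) (a * expR (a * t)).
Proof.
have scale_d : is_derive t 1 (fun s : R => a * s) a.
  by apply: is_derive_eq (is_deriveZ a (is_derive_id t 1)) _; rewrite [_%:A]mulr1.
by apply: is_derive_eq (is_derive1_comp (is_derive_expR (a * t)) scale_d) _; rewrite mulrC.
Qed.

Lemma exp_decay_of_derive (f df : R -> R) (a : R) :
  (forall t : R, is_derive t 1 f (df t)) -> (forall t, 0 <= t -> df t <= - a * f t) ->
  forall t, 0 <= t -> f t <= expR (- a * t) * f 0.
Proof.
move=> fd dfle t t0.
pose g s := expR (a * s) * f s.
have gd (s : R) : is_derive s 1 g (expR (a * s) * (df s + a * f s)).
  apply: is_derive_eq (is_deriveM (is_derive_expR_scale a s) (fd s)) _.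
  by rewrite /GRing.scale /=; ring.
have g_nonincr : g t <= g 0.
  have [->//|t_ne0] := eqVneq t 0.
  have t_gt0 : 0 < t by rewrite lt_def t_ne0.
  have gc : {within `[0, t], continuous g}.
    apply: continuous_subspaceT => x.
    by apply/differentiable_continuous/derivable1_diffP; case: (gd x).
  have [c] := MVT t_gt0 (fun x _ => gd x) gc.
  rewrite in_itv /= => /andP[c0 _] gE.
  rewrite -subr_le0 gE subr0; apply: mulr_le0_ge0; last exact: ltW.
  apply: mulr_ge0_le0; first exact: expR_ge0.
  by have := dfle c (ltW c0); lra.
have -> : f t = expR (- a * t) * g t by rewrite mulrA -expRD mulNr addNr expR0 mul1r.
by rewrite ler_wpM2l ?expR_ge0 // (le_trans g_nonincr) // /g mulr0 expR0 mul1r.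
Qed.

Lemma sqrt_le_expR (a t X X0 : R) : 0 <= X0 ->
  X <= expR (- (2 * a) * t) * X0 -> Num.sqrt X <= expR (- a * t) * Num.sqrt X0.
Proof.
move=> X00 /ler_wsqrtr /le_trans; apply.
have -> : - (2 * a) * t = - a * t + - a * t by ring.
by rewrite expRD sqrtrM ?mulr_ge0 ?expR_ge0 // -expr2 sqrtr_sqr ger0_norm ?expR_ge0.
Qed.

Lemma cvgr_expR_mul (a c : R) : 0 < a -> expR (- a * t) * c @[t --> +oo%R] --> 0.
Proof.
move=> a0.
have scale_y : a * t @[t --> +oo%R] --> +oo%R.
  apply/cvgryPge => A; apply: filterS (nbhs_pinfty_ge (num_real (a^-1 * A))) => t.
  by rewrite ler_pdivrMl.
have exp0 : expR (- a * t) @[t --> +oo%R] --> 0.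
  under eq_fun do rewrite mulNr.
  exact: (cvg_comp _ _ scale_y (@cvgr_expR R)).
by rewrite -(mul0r c); apply: cvgM => //; exact: cvg_cst.
Qed.

End ExponentialDecay.

Section BlockZero.
Variables (R : realType) (N d : nat) (l : 'I_N).

Lemma block_zeroD (y z : 'cV[R]_(N * d)) :
  block_zero l y -> block_zero l z -> block_zero l (y + z).
Proof. by move=> yl zl k; rewrite mxE yl zl addr0. Qed.

Lemma block_zeroZ a (y : 'cV[R]_(N * d)) : block_zero l y -> block_zero l (a *: y).
Proof. by move=> yl k; rewrite mxE yl mulr0. Qed.

Lemma block_zero_const (f : R -> 'cV[R]_(N * d)) (df : R -> 'cV[R]_(N * d)) :
  (forall t, is_derive_col t f (df t)) -> (forall t, block_zero l (df t)) ->
  block_zero l (f 0) -> forall t, block_zero l (f t).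
Proof.
move=> fd dfl f0l t k; rewrite -(f0l k).
apply: (@is_derive_0_is_cst _ (fun s => f s (mxtens_index (l, k)) 0)) => s.
by rewrite -(dfl s k); exact: fd.
Qed.

End BlockZero.

Section SystemMatrix.
Variables (R : realType) (m : nat) (kp ku : R) (G : 'M[R]_m).

Local Notation A := (sysmat kp ku G).

Lemma e_p_sysmat y : e_p (A *m y) = kp *: (G *m e_p y) + e_u y.
Proof.
rewrite /e_p /e_u /sysmat -{1}(vsubmxK y) mul_block_col col_mxKu.
by rewrite -[X in row_mx _ _ *m X]vsubmxK mul_row_col mul0mx add0r mul1mx scalemxAl.
Qed.

Lemma e_v_sysmat y : e_v (A *m y) = kp *: (G *m e_v y) + ku *: (G *m e_u y).
Proof.
rewrite /e_v /e_u /sysmat -{1}(vsubmxK y) -{1}(vsubmxK (dsubmx y)).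
by rewrite mul_block_col col_mxKd mul0mx add0r mul_block_col col_mxKu !scalemxAl.
Qed.

Lemma e_u_sysmat y : e_u (A *m y) = ku *: (G *m e_u y).
Proof.
rewrite /e_u /sysmat -{1}(vsubmxK y) -{1}(vsubmxK (dsubmx y)).
rewrite mul_block_col col_mxKd mul0mx add0r.
by rewrite mul_block_col col_mxKd mul0mx add0r scalemxAl.
Qed.

Lemma vdotvv_sysmat_split (y : 'cV[R]_(m + (m + m))) :
  vdot y y = vdot (e_p y) (e_p y) + vdot (e_v y) (e_v y) + vdot (e_u y) (e_u y).
Proof.
rewrite /vdot big_split_ord /= [X in _ + X]big_split_ord /= addrA.
by congr (_ + _ + _); apply: eq_bigr => i _; rewrite !mxE.
Qed.

Section Solution.
Variable x : R -> 'cV[R]_(m + (m + m)).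
Hypothesis x_sol : is_solution A x.

Lemma is_derive_e_p t :
  is_derive_col t (fun s => e_p (x s)) (kp *: (G *m e_p (x t)) + e_u (x t)).
Proof. by rewrite -e_p_sysmat; apply: is_derive_col_usubmx; exact: x_sol. Qed.

Lemma is_derive_e_v t :
  is_derive_col t (fun s => e_v (x s)) (kp *: (G *m e_v (x t)) + ku *: (G *m e_u (x t))).
Proof.
rewrite -e_v_sysmat; apply: is_derive_col_usubmx.
by apply: is_derive_col_dsubmx; exact: x_sol.
Qed.

Lemma is_derive_e_u t : is_derive_col t (fun s => e_u (x s)) (ku *: (G *m e_u (x t))).
Proof.
rewrite -e_u_sysmat; apply: is_derive_col_dsubmx.
by apply: is_derive_col_dsubmx; exact: x_sol.
Qed.

End Solution.

Lemma is_solution_sysmat (p v u : R -> 'cV[R]_m) :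
  (forall t, is_derive_col t p (kp *: (G *m p t) + u t)) ->
  (forall t, is_derive_col t v (kp *: (G *m v t) + ku *: (G *m u t))) ->
  (forall t, is_derive_col t u (ku *: (G *m u t))) ->
  is_solution A (fun s => col_mx (p s) (col_mx (v s) (u s))).
Proof.
move=> pd vd ud t; set y := col_mx (p t) _.
have -> : A *m y = col_mx (e_p (A *m y)) (col_mx (e_v (A *m y)) (e_u (A *m y))).
  by rewrite /e_p /e_v /e_u !vsubmxK.
rewrite e_p_sysmat e_v_sysmat e_u_sysmat /e_p /e_v /e_u /y !col_mxKu !col_mxKd !col_mxKu.
by do !apply: is_derive_col_col_mx.
Qed.

End SystemMatrix.

Section LeaderFollower.
Variables (R : realType) (n d : nat) (e : rel 'I_n.+1) (l : 'I_n.+1) (kp ku lam : R).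
Hypotheses (e_sym : symmetric e) (e_connected : forall i j, connect e i j).
Hypotheses (kp_gt0 : 0 < kp) (ku_gt0 : 0 < ku).

Local Notation L := (laplacian (adjacency R e)).
Local Notation K := (tensmx (zero_row l L) (1%:M : 'M[R]_d)).
Local Notation G := (Gmat d l L).
Local Notation A := (sysmat kp ku G).
Local Notation invariant y :=
  [/\ block_zero l (e_p y), block_zero l (e_v y) & block_zero l (e_u y)].

Hypothesis lam_eig : eigenvalue (Mmat l L) lam.
Hypothesis lam_min : forall a, eigenvalue (Mmat l L) a -> lam <= a.

Lemma lam_gt0 : 0 < lam.
Proof. exact: (Mmat_laplacian_eigenvalue_gt0 (lam := lam) e_sym e_connected lam_eig). Qed.

Lemma Gmat_mulE (y : 'cV[R]_(n.+1 * d)) : G *m y = - (K *m y).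
Proof. by rewrite mulNmx. Qed.

Lemma block_zero_Gmat (y : 'cV[R]_(n.+1 * d)) : block_zero l (G *m y).
Proof. by move=> k; rewrite Gmat_mulE mxE block_zero_tensmx_zero_row oppr0. Qed.

Lemma rayleigh_K (y : 'cV[R]_(n.+1 * d)) :
  block_zero l y -> lam * vdot y y <= vdot y (K *m y).
Proof. exact: (rayleigh_tensmx_zero_row (lam := lam) (laplacian_sym R e_sym) lam_min). Qed.

Lemma vdot_K_ge0 (y : 'cV[R]_(n.+1 * d)) : block_zero l y -> 0 <= vdot y (K *m y).
Proof.
by move=> yl; rewrite (le_trans _ (rayleigh_K yl)) ?mulr_ge0 ?vdotvv_ge0 ?ltW ?lam_gt0.
Qed.

(* c >= ku / kp absorbs the cross term v.Ku and c ku lam >= 2 / (kp lam) the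
   term p.u, after Young's inequality. *)
Definition lyap_weight := 1 + ku / kp + 2 / (kp * ku * lam ^+ 2).
Definition lyap_rate := Num.min (kp * lam) (ku * lam / 2).
Definition lyapunov m (y : 'cV[R]_(m + (m + m))) :=
  vdot (e_p y) (e_p y) + vdot (e_v y) (e_v y) + lyap_weight * vdot (e_u y) (e_u y).

Lemma lyap_weight_ge1 : 1 <= lyap_weight.
Proof.
have := lam_gt0 => lam0; rewrite /lyap_weight.
by rewrite -addrA lerDl addr_ge0 // ?divr_ge0 ?mulr_ge0 ?exprn_ge0 ?ltW.
Qed.

Lemma lyap_rate_gt0 : 0 < lyap_rate.
Proof. by have := lam_gt0 => lam0; rewrite lt_min !mulr_gt0 ?invr_gt0. Qed.

Lemma vdotvv_le_lyapunov m (y : 'cV[R]_(m + (m + m))) : vdot y y <= lyapunov y.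
Proof.
rewrite vdotvv_sysmat_split lerD2l ler_peMl ?vdotvv_ge0 //; exact: lyap_weight_ge1.
Qed.

Lemma lyapunov_le m (y : 'cV[R]_(m + (m + m))) : lyapunov y <= lyap_weight * vdot y y.
Proof.
have c1 := lyap_weight_ge1.
rewrite vdotvv_sysmat_split /lyapunov !mulrDr lerD2r.
by rewrite lerD ?ler_peMl ?vdotvv_ge0.
Qed.

Lemma lyapunov_derivative_le (P V U Kpp Kvv Kuu pu vKu : R) :
  0 <= P -> 0 <= V -> 0 <= U ->
  lam * P <= Kpp -> lam * V <= Kvv -> lam * U <= Kuu ->
  2 * pu <= kp * lam * P + (kp * lam)^-1 * U ->
  0 <= kp * Kvv + 2 * ku * vKu + ku ^+ 2 / kp * Kuu ->
  2 * (- kp * Kpp + pu) + 2 * (- kp * Kvv - ku * vKu) + lyap_weight * (2 * (- ku * Kuu))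
    <= - lyap_rate * (P + V + lyap_weight * U).
Proof.
move=> P0 V0 U0 KP KV KU pu_le vKu_ge.
have lam0 := lam_gt0; have c1 := lyap_weight_ge1.
have q0 : 0 <= ku / kp by rewrite divr_ge0 ?ltW.
have z0 : 0 <= 2 / (kp * ku * lam ^+ 2) by rewrite divr_ge0 ?mulr_ge0 ?ltW.
have ku_kp_le : ku / kp <= lyap_weight by rewrite /lyap_weight; lra.
have r_le : 2 * (kp * lam)^-1 <= lyap_weight * ku * lam.
  have -> : 2 * (kp * lam)^-1 = 2 / (kp * ku * lam ^+ 2) * ku * lam.
    by field; rewrite !gt_eqF.
  rewrite ler_pM2r // ler_pM2r //.
  by rewrite /lyap_weight; lra.
have Kuu0 : 0 <= Kuu := le_trans (mulr_ge0 (ltW lam0) U0) KU.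
have cross : ku ^+ 2 / kp * Kuu <= lyap_weight * ku * Kuu.
  apply: ler_wpM2r => //; rewrite expr2 mulrAC.
  by apply: ler_wpM2r => //; exact: ltW.
have hP := ler_wpM2l (ltW kp_gt0) KP; have hV := ler_wpM2l (ltW kp_gt0) KV.
have hU := ler_wpM2l (mulr_ge0 (le_trans ler01 c1) (ltW ku_gt0)) KU.
have rU := ler_wpM2r U0 r_le.
have b_le1 : lyap_rate <= kp * lam by rewrite ge_min lexx.
have b_le2 : 2 * lyap_rate <= ku * lam.
  by rewrite -ler_pdivlMl // mulrC ge_min lexx orbT.
have bPV := ler_wpM2r (addr_ge0 P0 V0) b_le1.
have bU := ler_wpM2r (mulr_ge0 (le_trans ler01 c1) U0) b_le2.
lra.
Qed.

Lemma K_cross_ge0 (y z : 'cV[R]_(n.+1 * d)) : block_zero l y -> block_zero l z ->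
  0 <= kp * vdot y (K *m y) + 2 * ku * vdot y (K *m z) + ku ^+ 2 / kp * vdot z (K *m z).
Proof.
move=> yl zl; have := vdot_K_ge0 (block_zeroD (block_zeroZ (kp / ku) yl) zl).
rewrite mulmxDr -scalemxAr !vdotDl !vdotDr !vdotZl !vdotZr.
rewrite (vdot_tensmx_zero_rowC (laplacian_sym R e_sym) zl yl) => h.
have -> : kp * vdot y (K *m y) + 2 * ku * vdot y (K *m z) + ku ^+ 2 / kp * vdot z (K *m z) =
    ku ^+ 2 / kp * (kp / ku * (kp / ku * vdot y (K *m y)) + kp / ku * vdot y (K *m z) +
                    (kp / ku * vdot y (K *m z) + vdot z (K *m z))).
  by field; rewrite !gt_eqF.
by rewrite mulr_ge0 // divr_ge0 ?sqr_ge0 ?ltW.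
Qed.

Section Solution.
Variable x : R -> 'cV[R]_(n.+1 * d + (n.+1 * d + n.+1 * d)).
Hypotheses (x_sol : is_solution A x) (x0_inv : invariant (x 0)).

Local Notation p t := (e_p (x t)).
Local Notation v t := (e_v (x t)).
Local Notation u t := (e_u (x t)).

Lemma solution_invariant t : invariant (x t).
Proof.
have [p0 v0 u0] := x0_inv.
have Gl a y : block_zero l (a *: (G *m y)) by apply/block_zeroZ/block_zero_Gmat.
have ut s : block_zero l (u s).
  exact: block_zero_const (is_derive_e_u x_sol) (fun=> Gl _ _) u0 s.
split=> //.
  exact: block_zero_const (is_derive_e_p x_sol) (fun s => block_zeroD (Gl _ _) (ut s)) p0 t.
exact: block_zero_const (is_derive_e_v x_sol) (fun s => block_zeroD (Gl _ _) (Gl _ _)) v0 t.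
Qed.

Lemma is_derive_e_p_energy (t : R) : is_derive t 1 (fun s => vdot (p s) (p s))
  (2 * (- kp * vdot (p t) (K *m p t) + vdot (p t) (u t))).
Proof.
apply: is_derive_eq (is_derive_vdot (is_derive_e_p x_sol t)) _.
by rewrite vdotDr vdotZr Gmat_mulE vdotNr mulNr mulrN.
Qed.

Lemma is_derive_e_v_energy (t : R) : is_derive t 1 (fun s => vdot (v s) (v s))
  (2 * (- kp * vdot (v t) (K *m v t) - ku * vdot (v t) (K *m u t))).
Proof.
apply: is_derive_eq (is_derive_vdot (is_derive_e_v x_sol t)) _.
by rewrite vdotDr !vdotZr !Gmat_mulE !vdotNr mulNr !mulrN.
Qed.

Lemma is_derive_e_u_energy (t : R) : is_derive t 1 (fun s => vdot (u s) (u s))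
  (2 * (- ku * vdot (u t) (K *m u t))).
Proof.
apply: is_derive_eq (is_derive_vdot (is_derive_e_u x_sol t)) _.
by rewrite vdotZr Gmat_mulE vdotNr mulNr mulrN.
Qed.

Lemma e_u_energy_decay t : 0 <= t ->
  vdot (u t) (u t) <= expR (- (2 * (ku * lam)) * t) * vdot (u 0) (u 0).
Proof.
apply: exp_decay_of_derive is_derive_e_u_energy _ t => s _.
have [_ _ /rayleigh_K us] := solution_invariant s.
have := ler_wpM2l (ltW ku_gt0) us; lra.
Qed.

Lemma e_u_norm_decay t : 0 <= t ->
  vnorm (u t) <= expR (- (ku * lam) * t) * vnorm (u 0).
Proof. by move=> t0; rewrite !vnormE sqrt_le_expR ?vdotvv_ge0 ?e_u_energy_decay. Qed.

Lemma e_u_eq0 : u 0 = 0 -> forall t, 0 <= t -> u t = 0.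
Proof.
move=> u00 t t0; apply/eqP; rewrite -vdotvv_eq0 eq_le vdotvv_ge0 andbT.
by have := e_u_energy_decay t0; rewrite u00 vdot0l mulr0.
Qed.

Lemma e_pv_energy_decay : u 0 = 0 -> forall t, 0 <= t ->
  vdot (p t) (p t) + vdot (v t) (v t) <=
  expR (- (2 * (kp * lam)) * t) * (vdot (p 0) (p 0) + vdot (v 0) (v 0)).
Proof.
move=> u00; apply: exp_decay_of_derive (fun s =>
  is_deriveD (is_derive_e_p_energy s) (is_derive_e_v_energy s)) _ => s s0.
have [/rayleigh_K ps /rayleigh_K vs _] := solution_invariant s.
rewrite addrfctE (e_u_eq0 u00 s0) mulmx0 !vdot0r.
have := ler_wpM2l (ltW kp_gt0) ps; have := ler_wpM2l (ltW kp_gt0) vs; lra.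
Qed.

Lemma e_pv_norm_decay : u 0 = 0 -> forall t, 0 <= t ->
  vnorm2 (p t) (v t) <= expR (- (kp * lam) * t) * vnorm2 (p 0) (v 0).
Proof.
move=> u00 t t0; rewrite !vnorm2E sqrt_le_expR ?e_pv_energy_decay //.
by rewrite addr_ge0 ?vdotvv_ge0.
Qed.

Lemma lyapunov_decay t : 0 <= t ->
  lyapunov (x t) <= expR (- lyap_rate * t) * lyapunov (x 0).
Proof.
apply: (@exp_decay_of_derive _ (fun s => lyapunov (x s))) _ t => [s|s _].
  exact: is_deriveD (is_deriveD (is_derive_e_p_energy s) (is_derive_e_v_energy s))
    (is_deriveZ lyap_weight (is_derive_e_u_energy s)).
have [ps vs us] := solution_invariant s.
apply: lyapunov_derivative_le; rewrite ?vdotvv_ge0 ?rayleigh_K ?K_cross_ge0 //.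
by apply: vdot_young; rewrite mulr_gt0 ?lam_gt0.
Qed.

End Solution.

Lemma lyapunov_ge0 m (y : 'cV[R]_(m + (m + m))) : 0 <= lyapunov y.
Proof. exact: le_trans (vdotvv_ge0 y) (vdotvv_le_lyapunov y). Qed.

Lemma solution_stable eps : 0 < eps -> exists2 delta : R, 0 < delta &
  forall x, is_solution A x -> invariant (x 0) -> vnorm (x 0) < delta ->
    forall t : R, 0 <= t -> vnorm (x t) < eps.
Proof.
move=> eps0; have c0 : 0 < lyap_weight := lt_le_trans ltr01 lyap_weight_ge1.
have sc0 : 0 < Num.sqrt lyap_weight by rewrite sqrtr_gt0.
exists (eps / Num.sqrt lyap_weight) => [|x x_sol x0_inv x0_lt t t0]; first exact: divr_gt0.
have xt_le : vdot (x t) (x t) <= lyap_weight * vdot (x 0) (x 0).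
  apply: le_trans (vdotvv_le_lyapunov _) _.
  apply: le_trans (lyapunov_decay x_sol x0_inv t0) _.
  apply: le_trans (lyapunov_le _); rewrite ler_piMl ?lyapunov_ge0 // expR_le1.
  by rewrite mulNr oppr_le0 mulr_ge0 // ltW // lyap_rate_gt0.
rewrite vnormE (le_lt_trans (ler_wsqrtr xt_le)) // sqrtrM ?ltW // -vnormE.
by rewrite -ltr_pdivlMl // mulrC.
Qed.

Lemma solution_cvg0 x : is_solution A x -> invariant (x 0) ->
  vnorm (x t) @[t --> +oo%R] --> 0%R.
Proof.
move=> x_sol x0_inv.
pose bound t := expR (- (lyap_rate / 2) * t) * Num.sqrt (lyapunov (x 0)).
have x_le t : 0 <= t -> vnorm (x t) <= bound t.
  move=> t0; rewrite vnormE sqrt_le_expR ?lyapunov_ge0 //.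
  have -> : 2 * (lyap_rate / 2) = lyap_rate by field.
  exact: le_trans (vdotvv_le_lyapunov _) (lyapunov_decay x_sol x0_inv t0).
apply: (@squeeze_cvgr _ _ _ _ (cst 0) bound); last 2 first.
- exact: cvg_cst.
- by apply: cvgr_expR_mul; rewrite divr_gt0 ?lyap_rate_gt0.
apply: filterS (nbhs_pinfty_ge (num_real 0)) => t t0.
by rewrite /cst x_le // andbT vnormE sqrtr_ge0.
Qed.

Lemma is_solution_eigenmode (w : 'cV[R]_(n.+1 * d)) (h g E : R -> R) :
  K *m w = lam *: w ->
  (forall t : R, is_derive t 1 h (- (kp * lam) * h t + E t)) ->
  (forall t : R, is_derive t 1 g (- (kp * lam) * g t - ku * lam * E t)) ->
  (forall t : R, is_derive t 1 E (- (ku * lam) * E t)) ->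
  is_solution A (fun s => col_mx (h s *: w) (col_mx (g s *: w) (E s *: w))).
Proof.
move=> Kw hd gd Ed.
have Gw a : G *m (a *: w) = (- lam * a) *: w.
  by rewrite Gmat_mulE -scalemxAr Kw scalerA -scaleNr mulNr mulrC.
apply: is_solution_sysmat => t; rewrite !Gw !scalerA.
- rewrite -scalerDl; apply: is_derive_col_scale.
  by apply: is_derive_eq (hd t) _; ring.
- rewrite -scalerDl; apply: is_derive_col_scale.
  by apply: is_derive_eq (gd t) _; ring.
- apply: is_derive_col_scale.
  by apply: is_derive_eq (Ed t) _; ring.
Qed.

Hypothesis d_gt0 : (0 < d)%N.

Lemma e_u_rate_attained : exists2 x, is_solution A x &
  [/\ invariant (x 0), e_u (x 0) != 0 & forall t : R, 0 <= t ->
    vnorm (e_u (x t)) = expR (- (ku * lam) * t) * vnorm (e_u (x 0))].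
Proof.
have [w [wl w0 Kw]] := tensmx_zero_row_eigenvector (laplacian_sym R e_sym) d_gt0 lam_eig.
pose E s := expR (- (ku * lam) * s).
have Ed (t : R) : is_derive t 1 E (- (ku * lam) * E t) by exact: is_derive_expR_scale.
suff [h [g [hd gd]]] : exists h g : R -> R,
    (forall t : R, is_derive t 1 h (- (kp * lam) * h t + E t)) /\
    (forall t : R, is_derive t 1 g (- (kp * lam) * g t - ku * lam * E t)).
  exists (fun s => col_mx (h s *: w) (col_mx (g s *: w) (E s *: w))).
    exact: is_solution_eigenmode Kw hd gd Ed.
  rewrite /e_p /e_v /e_u !col_mxKu !col_mxKd !col_mxKu /E mulr0 expR0 scale1r.
  split=> [|//|t _]; first by split=> //; apply: block_zeroZ.
  by rewrite !col_mxKd vnormZ ger0_norm ?expR_ge0.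
have [kpu|kpu] := eqVneq kp ku.
  (* resonance kp = ku: the forced (e_p, e_v) mode is t e^{-ku lam t} *)
  exists (fun s => s * E s), (fun s => - (ku * lam) * (s * E s)); split => t.
    apply: is_derive_eq (is_deriveM (is_derive_id t 1) (Ed t)) _.
    by rewrite kpu /GRing.scale /=; ring.
  apply: is_derive_eq (is_deriveZ _ (is_deriveM (is_derive_id t 1) (Ed t))) _.
  by rewrite kpu /GRing.scale /=; ring.
have kpu' : kp - ku != 0 by rewrite subr_eq0.
exists (fun s => ((kp - ku) * lam)^-1 * E s), (fun s => ku / (ku - kp) * E s).
split => t; apply: is_derive_eq (is_deriveZ _ (Ed t)) _; rewrite /GRing.scale /=.
  by field; rewrite kpu' gt_eqF ?lam_gt0.
by field; rewrite subr_eq0 eq_sym kpu.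
Qed.

Lemma e_pv_rate_attained : exists2 x, is_solution A x &
  [/\ invariant (x 0), e_u (x 0) = 0, (e_p (x 0) != 0) || (e_v (x 0) != 0) &
    forall t : R, 0 <= t ->
    vnorm2 (e_p (x t)) (e_v (x t)) =
    expR (- (kp * lam) * t) * vnorm2 (e_p (x 0)) (e_v (x 0))].
Proof.
have [w [wl w0 Kw]] := tensmx_zero_row_eigenvector (laplacian_sym R e_sym) d_gt0 lam_eig.
pose h s := expR (- (kp * lam) * s).
pose z (s : R) := 0 : R.
have hd (t : R) : is_derive t 1 h (- (kp * lam) * h t + z t).
  by apply: is_derive_eq (is_derive_expR_scale _ t) _; rewrite addr0.
have zd (t : R) : is_derive t 1 z (- (kp * lam) * z t - ku * lam * z t).
  by apply: is_derive_eq (is_derive_cst (0 : R) t 1) _; rewrite /z !mulr0 subr0.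
have zd' (t : R) : is_derive t 1 z (- (ku * lam) * z t).
  by apply: is_derive_eq (is_derive_cst (0 : R) t 1) _; rewrite /z mulr0.
exists (fun s => col_mx (h s *: w) (col_mx (z s *: w) (z s *: w))).
  exact: is_solution_eigenmode Kw hd zd zd'.
rewrite /e_p /e_v /e_u !col_mxKu !col_mxKd !col_mxKu /z !scale0r /h mulr0 expR0 scale1r.
split=> [|//||t _]; first by split=> // k; rewrite mxE.
  by rewrite w0.
rewrite !col_mxKd !col_mxKu !vnorm2E !vdot0l !addr0 -!vnormE.
by rewrite vnormZ ger0_norm ?expR_ge0.
Qed.

End LeaderFollower.

Theorem proposition1 (R : realType) (n d : nat) (e : rel 'I_n.+1) (l : 'I_n.+1)
  (kp ku lam : R) :
  symmetric e -> irreflexive e -> (forall i j, connect e i j) ->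
  (0 < d)%N -> 0 < kp -> 0 < ku ->
  let L := laplacian (adjacency R e) in
  let G := Gmat d l L in
  let A := sysmat kp ku G in
  let S := fun x : 'cV[R]_(n.+1 * d + (n.+1 * d + n.+1 * d)) =>
      [/\ block_zero l (e_p x), block_zero l (e_v x) & block_zero l (e_u x)] in
  eigenvalue (Mmat l L) lam -> (forall a, eigenvalue (Mmat l L) a -> lam <= a) ->
  [/\
    (forall eps : R, 0 < eps -> exists2 delta : R, 0 < delta &
       forall x, is_solution A x -> S (x 0) -> vnorm (x 0) < delta ->
         forall t : R, 0 <= t -> vnorm (x t) < eps),
    (forall x, is_solution A x -> S (x 0) ->
       vnorm (x t) @[t --> +oo%R] --> 0%R),
    (forall x, is_solution A x -> S (x 0) -> forall t : R, 0 <= t ->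
       vnorm (e_u (x t)) <= expR (- (ku * lam) * t) * vnorm (e_u (x 0)))
    /\ (exists2 x, is_solution A x &
         [/\ S (x 0), e_u (x 0) != 0 & forall t : R, 0 <= t ->
           vnorm (e_u (x t)) = expR (- (ku * lam) * t) * vnorm (e_u (x 0))]),
    (forall x, is_solution A x -> S (x 0) -> e_u (x 0) = 0 -> forall t : R, 0 <= t ->
       vnorm2 (e_p (x t)) (e_v (x t))
         <= expR (- (kp * lam) * t) * vnorm2 (e_p (x 0)) (e_v (x 0)))
    &
    (exists2 x, is_solution A x &
         [/\ S (x 0), e_u (x 0) = 0, (e_p (x 0) != 0) || (e_v (x 0) != 0) &
           forall t : R, 0 <= t ->
           vnorm2 (e_p (x t)) (e_v (x t))
             = expR (- (kp * lam) * t) * vnorm2 (e_p (x 0)) (e_v (x 0))])].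
Proof.
move=> e_sym _ e_conn d_gt0 kp_gt0 ku_gt0 L G A S lam_eig lam_min; split.
- exact: solution_stable e_sym e_conn kp_gt0 ku_gt0 lam_eig lam_min.
- exact: solution_cvg0 e_sym e_conn kp_gt0 ku_gt0 lam_eig lam_min.
- split; first exact: e_u_norm_decay e_sym ku_gt0 lam_min.
  have [x x_sol [x0 u0 rate]] := e_u_rate_attained kp ku e_sym e_conn lam_eig d_gt0.
  by exists x.
- exact: e_pv_norm_decay e_sym kp_gt0 ku_gt0 lam_min.
- have [x x_sol [x0 u0 pv0 rate]] := e_pv_rate_attained kp ku e_sym lam_eig d_gt0.
  by exists x.
Qed.
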